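(* Let $\Lambda$ be a recursive $\varepsilon$-number, and let $I$, $H$, $R_n^\alpha$, $S_n^\alpha$ be as in the context. For all $x, y \in H$, $n<\omega$ and $\alpha<\Lambda$: $x S_n^\alpha y$ if and only if $x R_n^\alpha y$.
   Context: Fix a recursive ordinal $\Lambda$ that is an $\varepsilon$-number, i.e. $\omega^\Lambda = \Lambda$. The ordinal logarithm is defined by $\ell(0)=0$ and $\ell(\alpha+\omega^\beta)=\beta$. An $\ell$-sequence is a sequence of ordinals $x=\langle x_0,x_1,\dots\rangle$ indexed by $\omega$ with $x_{i+1}\le \ell(x_i)$ for all $i<\omega$. Let $I$ be the set of $\ell$-sequences all of whose entries are $<\Lambda$, and $H\subseteq I$ the set of those $x\in I$ with $x_j=0$ for some $j<\omega$. For $n<\omega$, define $x R_n y$ for $x,y\in I$ (and $x S_n y$ for $x,y\in H$, same condition) by: $x_m>y_m$ for all $m\le n$ and $x_i\ge y_i$ for all $i>n$. Define $R_n^\alpha$ on $I$ recursively: $x R_n^0 y$ iff $x=y$; $x R_n^{1+\alpha} y$ iff for every $\beta<1+\alpha$ there is $z\in I$ with $x R_n z$ and $z R_n^\beta y$. Define $S_n^\alpha$ on $H$ in the same way, with $S_n$ in place of $R_n$ and $z$ ranging over $H$. *)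

From mathcomp Require Import all_boot.
Set Implicit Arguments. Unset Strict Implicit. Unset Printing Implicit Defensive.

(** The ordinals < Lambda are represented by the elements of a (decidable,
  i.e. boolean) strict well-order [olt] on [nat] of order type Lambda.
  The Cantor-normal-form map [cnf] is an order isomorphism between
  (nat, olt) and the finitely supported functions L -> nat ordered as
  omega^L (compare at the olt-largest point of difference):
     alpha = sum_{beta} omega^beta * cnf alpha beta.
  Such an isomorphism exists iff omega^Lambda = Lambda. *)

Definition omega_lt (olt : rel nat) (f g : nat -> nat) : Prop :=
  exists p, f p < g p /\ forall q, olt p q -> f q = g q.

Definition fin_supp (f : nat -> nat) : Prop :=
  exists s : seq nat, forall p, f p != 0 -> p \in s.

Record eps_number := EpsNumber {
  olt : rel nat;
  olt_irr : forall a, ~~ olt a a;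
  olt_trans : forall a b c, olt a b -> olt b c -> olt a c;
  olt_total : forall a b, a != b -> olt a b || olt b a;
  olt_wf : well_founded (fun a b => olt a b);
  cnf : nat -> nat -> nat;
  cnf_fin : forall a, fin_supp (cnf a);
  cnf_onto : forall f, fin_supp f -> exists a, forall p, cnf a p = f p;
  cnf_mono : forall a b, olt a b <-> omega_lt olt (cnf a) (cnf b)
}.

Section Defs.
Variable L : eps_number.

Definition ole (a b : nat) : bool := (a == b) || olt L a b.

Definition is_zero (a : nat) : Prop := forall b, ole a b.

(* ell a = b : ell(0) = 0 and ell(alpha' + omega^beta) = beta, i.e. beta is the
   smallest exponent occurring in the Cantor normal form of alpha *)
Definition is_log (a b : nat) : Prop :=
  ((forall p, cnf L a p = 0) /\ is_zero b) \/
  (cnf L a b != 0 /\ forall q, olt L q b -> cnf L a q = 0).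

Definition in_I (x : nat -> nat) : Prop :=
  forall i b, is_log (x i) b -> ole (x i.+1) b.

Definition in_H (x : nat -> nat) : Prop :=
  in_I x /\ exists j, is_zero (x j).

Definition Rn (n : nat) (x y : nat -> nat) : Prop :=
  (forall m, m <= n -> olt L (y m) (x m)) /\
  (forall i, n < i -> ole (y i) (x i)).

(* iterated relation: D is the domain over which z ranges (I or H).
   it_rel D n 0 x y <-> x = y ;
   for gamma > 0 (gamma = 1 + alpha):
   it_rel D n gamma x y <-> forall beta < gamma, exists z in D,
                             x R_n z /\ it_rel D n beta z y. *)
Definition it_rel (D : (nat -> nat) -> Prop) (n : nat) :
  nat -> (nat -> nat) -> (nat -> nat) -> Prop :=
  Fix (olt_wf L) (fun _ => (nat -> nat) -> (nat -> nat) -> Prop)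
    (fun g rec x y =>
       (is_zero g -> x = y) /\
       (~ is_zero g -> forall b (hb : olt L b g),
            exists z, D z /\ Rn n x z /\ rec b hb z y)).

Definition Rna (n alpha : nat) := it_rel in_I n alpha.
Definition Sna (n alpha : nat) := it_rel in_H n alpha.

End Defs.

(** Since H is contained in I, every S-witness is an R-witness.  Conversely,
    an R_n-step never increases an entry, and 0 is the least ordinal, so an
    R_n-step out of a sequence of H stays in H; hence, by well-founded
    induction on alpha, the witnesses of an R-chain starting in H all lie in
    H. *)

From mathcomp Require Import all_boot.
From Stdlib Require Import FunctionalExtensionality.

Set Implicit Arguments.
Unset Strict Implicit.
Unset Printing Implicit Defensive.

Section IteratedRelations.
Variable L : eps_number.

Lemma it_rel_unfold (D : (nat -> nat) -> Prop) n g x y :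
  it_rel L D n g x y <->
  ((is_zero L g -> x = y) /\
   (~ is_zero L g -> forall b, olt L b g ->
        exists z, D z /\ Rn L n x z /\ it_rel L D n b z y)).
Proof.
rewrite /it_rel Fix_eq; last first.
  move=> a f h Efh; have -> // : f = h.
  by apply: functional_extensionality_dep => b; apply: functional_extensionality_dep.
by split=> -[h0 hS]; split=> // nz b hb; apply: hS.
Qed.

Lemma is_zero_min a : is_zero L a -> forall b, ~~ olt L b a.
Proof.
move=> za b; apply/negP=> hba; have /orP[/eqP eab | hab] := za b.
  by move: hba; rewrite eab (negbTE (olt_irr L b)).
by move: (olt_irr L a); rewrite (olt_trans hab hba).
Qed.

Lemma is_zero_ole a b : is_zero L a -> ole L b a -> is_zero L b.
Proof.
move=> za /orP[/eqP -> // | hba].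
by move: (is_zero_min za b); rewrite hba.
Qed.

Lemma Rn_in_H n x z : in_H L x -> in_I L z -> Rn L n x z -> in_H L z.
Proof.
move=> [_ [j zj]] Iz [Rlt Rle]; split=> //; exists j.
have [jn | nj] := leqP j n; last exact: is_zero_ole zj (Rle j nj).
by move: (is_zero_min zj (z j)); rewrite Rlt.
Qed.

Lemma it_rel_restrict (D D' : (nat -> nat) -> Prop) n :
  (forall z, D z -> D' z) ->
  (forall x z, D x -> D' z -> Rn L n x z -> D z) ->
  forall g x y, D x -> (it_rel L D n g x y <-> it_rel L D' n g x y).
Proof.
move=> subD closedD g; elim/(well_founded_induction (olt_wf L)): g => g IH x y Dx.
split=> /it_rel_unfold [h0 hS]; apply/it_rel_unfold; split=> // nz b hb.
  have [z [Dz [xRz zy]]] := hS nz b hb.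
  by exists z; split; [exact: subD | split; last exact/(IH b hb z y Dz)].
have [z [D'z [xRz zy]]] := hS nz b hb.
have Dz := closedD x z Dx D'z xRz.
by exists z; split; [ | split; last exact/(IH b hb z y Dz)].
Qed.

End IteratedRelations.

Theorem proposition4p7 (L : eps_number) (x y : nat -> nat) (n alpha : nat) :
  in_H L x -> in_H L y -> (Sna L n alpha x y <-> Rna L n alpha x y).
Proof.
move=> Hx _; apply: it_rel_restrict Hx.
- by move=> z [].
- exact: Rn_in_H.
Qed.
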